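(* Let $k\ge2$ and $m\ge2$ be integers and put $n=m(k-1)$. Suppose $A(x)=\sum_{i=0}^{k-1}a_ix^i$ is a monic polynomial of degree $k-1$, $B$ is a polynomial, and $c\in\mathbb C$, $c\neq0$, are such that $$A(x)^m-c\,(x-1)=x^k B(x).$$ Then $A$ satisfies the differential equation $$m\,A'(x)\,(x-1)-A(x)=\big(m(k-1)-1\big)\,x^{k-1};$$ consequently its coefficients are given by $a_{k-1}=1$ and $a_i=\dfrac{m(i+1)}{mi-1}\,a_{i+1}$ for $0\le i\le k-2$. Moreover $c=-a_0^m$.
   Context: This is the normalization of the Davenport–Zannier pair $P=A^m$, $Q=x^kB$, $R=P-Q=c(x-1)$ for a weighted tree of diameter 4 (series $G$) whose central white vertex (at $0$) has degree $k$ and all black vertices have degree $m$. *)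

From HB Require Import structures.
From mathcomp Require Import all_boot all_order all_algebra.
Set Implicit Arguments. Unset Strict Implicit. Unset Printing Implicit Defensive.

From mathcomp Require Import all_boot all_order all_algebra.
From mathcomp Require Import ring.
Set Implicit Arguments.
Unset Strict Implicit.
Import GRing.Theory Num.Theory.
Local Open Scope ring_scope.

(* Differentiating A^m = c (X - 1) + X^k B and multiplying by X - 1 eliminates
   c: A^(m-1) (m A' (X - 1) - A) is divisible by X^(k-1).  Since A(0) != 0, the
   factor A^(m-1) is coprime to X, so X^(k-1) divides m A' (X - 1) - A, a
   polynomial of degree at most k - 1; it is therefore a multiple of X^(k-1),
   and comparing coefficients gives the recurrence. *)

Definition dz_op (R : nzRingType) (m : nat) (p : {poly R}) : {poly R} :=
  m%:R *: (p^`() * ('X - 1)) - p.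

Lemma coef_dz_op (R : nzRingType) (m : nat) (p : {poly R}) (j : nat) :
  (dz_op m p)`_j = m%:R * (p`_j *+ j - p`_j.+1 *+ j.+1) - p`_j.
Proof.
rewrite /dz_op coefB coefZ mulrBr mulr1 coefB coefMX !coef_deriv.
by case: j.
Qed.

Lemma size_dz_op (R : nzRingType) (m : nat) (p : {poly R}) :
  (size (dz_op m p) <= size p)%N.
Proof.
apply/leq_sizeP => j le_p_j.
by rewrite coef_dz_op !nth_default ?(leqW le_p_j) // !mul0rn subrr mulr0 subr0.
Qed.

Lemma coef_dvdp_Xn (R : idomainType) (q : {poly R}) (n j : nat) :
  'X^n %| q -> (j < n)%N -> q`_j = 0.
Proof.
by move=> /(Pdiv.IdomainMonic.dvdpP (monicXn _ _))[r ->] lt_j_n; rewrite coefMXn lt_j_n.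
Qed.

Lemma dvdp_Xn_size_eq (R : idomainType) (q : {poly R}) (n : nat) :
  'X^n %| q -> (size q <= n.+1)%N -> q = q`_n *: 'X^n.
Proof.
move=> dvd_q sz_q; apply/polyP => j; rewrite coefZ coefXn.
case: (ltngtP j n) => [lt_j_n | lt_n_j | ->]; last by rewrite mulr1.
- by rewrite mulr0 (coef_dvdp_Xn dvd_q lt_j_n).
- by rewrite mulr0 nth_default // (leq_trans sz_q).
Qed.

Lemma coef0_eq_pow (R : comNzRingType) (p B : {poly R}) (c : R) (m n : nat) :
  p ^+ m = c *: ('X - 1) + 'X^(n.+1) * B -> c = - p`_0 ^+ m.
Proof.
move=> E; have := congr1 (horner^~ 0) E.
rewrite -horner_coef0 !hornerE /= => ->.
by rewrite expr0n mul0r addr0 mulrN1 opprK.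
Qed.

Lemma dvdp_Xn_dz_op (R : idomainType) (p B : {poly R}) (c : R) (m n : nat) :
  p`_0 != 0 -> p ^+ m.+1 = c *: ('X - 1) + 'X^(n.+1) * B ->
  'X^n %| dz_op m.+1 p.
Proof.
move=> p0 E.
have dE := congr1 deriv E; rewrite deriv_exp !derivE /= in dE.
have cop : coprimep 'X^n (p ^+ m).
  apply/coprimep_expl/coprimep_expr.
  by rewrite coprimep_sym -[X in coprimep _ X]subr0 -polyC0 coprimep_XsubC
             rootE horner_coef0.
have key : p ^+ m * dz_op m.+1 p
        = 'X^n * ((B *+ n.+1 + 'X * B^`()) * ('X - 1) - 'X * B).
  have -> : p ^+ m * dz_op m.+1 p = (p^`() * p ^+ m *+ m.+1) * ('X - 1) - p ^+ m.+1.
    by rewrite /dz_op scaler_nat exprSr; move: (p ^+ m) => P; ring.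
  by rewrite dE E exprS alg_polyC -mul_polyC; ring.
by rewrite -(Gauss_dvdpr _ cop) key dvdp_mulIl.
Qed.

Lemma dz_op_coef_recurrence (F : numFieldType) (m : nat) (p : {poly F}) (i : nat) :
  (1 < m)%N -> (dz_op m p)`_i = 0 ->
  p`_i = (m * i.+1)%:R / ((m * i)%:R - 1) * p`_i.+1.
Proof.
move=> m_gt1 Di0.
have mi_neq1 : (m * i)%:R - 1 != 0 :> F.
  rewrite subr_eq0 pnatr_eq1 muln_eq1; apply/nandP; left.
  by rewrite neq_ltn m_gt1 orbT.
rewrite mulrAC; apply: (canRL (mulfK mi_neq1)).
apply/eqP; rewrite -subr_eq0 -[X in _ == X]Di0 coef_dz_op.
rewrite -(mulr_natr p`_i) -(mulr_natr p`_i.+1) !natrM -addn1 natrD.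
by apply/eqP; ring.
Qed.

Theorem mainTheorem6 (C : numClosedFieldType) (k m : nat) (A B : {poly C}) (c : C) :
  (2 <= k)%N -> (2 <= m)%N ->
  A \is monic -> size A = k ->
  c != 0 ->
  A ^+ m - c *: ('X - 1) = 'X^k * B ->
  [/\ m%:R *: (A^`() * ('X - 1)) - A = ((m * (k - 1))%:R - 1) *: 'X^(k - 1),
      A`_(k - 1) = 1,
      (forall i : nat, (i <= k - 2)%N ->
         A`_i = (m * (i + 1))%:R / ((m * i)%:R - 1) * A`_(i + 1))
    & c = - (A`_0 ^+ m)].
Proof.
case: k => [|[|n]] // _; case: m => [|m] // m_gt1 monA szA c_neq0 E.
rewrite !subSS !subn0.
have {}E : A ^+ m.+1 = c *: ('X - 1) + 'X^(n.+2) * B by rewrite -E addrC subrK.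
have c_eq := coef0_eq_pow E.
have A0_neq0 : A`_0 != 0.
  by apply: contraNneq c_neq0 => A0; rewrite c_eq A0 expr0n oppr0.
have dvd_D : 'X^(n.+1) %| dz_op m.+1 A := dvdp_Xn_dz_op A0_neq0 E.
have lcA : A`_n.+1 = 1 by rewrite -(monicP monA) lead_coefE szA.
split=> //.
- rewrite -/(dz_op _ _) (dvdp_Xn_size_eq dvd_D); last by rewrite -szA size_dz_op.
  by rewrite coef_dz_op lcA nth_default ?szA // mul0rn subr0 natrM.
- move=> i le_i_n; rewrite addn1; apply: dz_op_coef_recurrence => //.
  exact: coef_dvdp_Xn dvd_D le_i_n.
Qed.
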